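(* If $\lambda\equiv 2\pmod 4$, $v=\frac{2nk}{\lambda}+t\equiv 2\pmod 4$ and $t$ is odd, then a ${}^\lambda\mathrm{H}_t(m,n;s,k)$ does not exist.
   Context: Let $m,n,s,k,\lambda,t$ be positive integers with $t$ dividing $\frac{2nk}{\lambda}$, let $v=\frac{2nk}{\lambda}+t$ and let $J$ be the subgroup of $\mathbb{Z}_v$ of order $t$. A $\lambda$-fold Heffter array ${}^\lambda\mathrm{H}_t(m,n;s,k)$ is an $m\times n$ partially filled array with entries in $\mathbb{Z}_v$ such that: (a) each row has exactly $s$ and each column exactly $k$ filled cells; (b) the multiset $\{\pm x: x$ an entry of a filled cell$\}$ (counted over all filled cells) contains each element of $\mathbb{Z}_v\setminus J$ exactly $\lambda$ times and no element of $J$; (c) every row and every column sums to $0$ in $\mathbb{Z}_v$. *)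

From HB Require Import structures.
From mathcomp Require Import all_boot all_order all_algebra.
Set Implicit Arguments. Unset Strict Implicit. Unset Printing Implicit Defensive.
Import GRing.Theory.
Local Open Scope ring_scope.

Definition heffter_v (n k lam t : nat) : nat := ((2 * n * k) %/ lam + t)%N.

(* An m x n partially filled array with entries in Z_v: None = empty cell. *)
Definition heffter_arr (m n k lam t : nat) :=
  'M[option 'Z_(heffter_v n k lam t)]_(m, n).

(* J = subgroup of Z_v of order t = multiples of v/t (t divides v). *)
Definition in_J (v t : nat) (y : 'Z_v) : bool := ((v %/ t) %| (y : nat))%N.

Definition is_lambda_heffter (m n s k lam t : nat)
    (A : heffter_arr m n k lam t) : Prop :=
  let v := heffter_v n k lam t in
  (forall i : 'I_m, #|[set j : 'I_n | A i j != None]| = s) /\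
  (forall j : 'I_n, #|[set i : 'I_m | A i j != None]| = k) /\
  (* (b) the multiset {+-x : x entry} covers Z_v \ J exactly lam times, J never *)
  (forall y : 'Z_v,
     (#|[set p : 'I_m * 'I_n | A p.1 p.2 == Some y]|
      + #|[set p : 'I_m * 'I_n | A p.1 p.2 == Some (- y)]|)%N
     = (if in_J t y then 0 else lam)%N) /\
  (forall i : 'I_m, \sum_(j < n) odflt 0 (A i j) = 0) /\
  (forall j : 'I_n, \sum_(i < m) odflt 0 (A i j) = 0).

Definition lambda_heffter_exists (m n s k lam t : nat) : Prop :=
  exists A : heffter_arr m n k lam t, is_lambda_heffter s A.

From mathcomp Require Import all_boot all_order all_algebra.
From mathcomp Require Import zify.

Set Implicit Arguments.
Unset Strict Implicit.
Unset Printing Implicit Defensive.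

(* For v even, the parity of the canonical representative in [0, v) is an
   additive map Z_v -> Z_2 ([odd_ZpD]).  Consequently (1) negation preserves
   parity, (2) exactly v/2 residues are odd, and (3) if a family of residues
   sums to 0 in Z_v, an even number of them are odd.  Since t is odd, the
   subgroup J has only even elements, so condition (b) says that each pair
   {y, -y} of odd residues is hit lam times; summing over the v/2 odd
   residues and using negation symmetry gives 2 S = lam * v/2, where S is the
   number of odd entries of the array.  With lam = 2 (mod 4) and v/2 odd this
   makes S odd, contradicting (3) applied to the (vanishing) sum of all
   entries, which is the sum of the row sums. *)

Import GRing.Theory.
Local Open Scope ring_scope.

Section EvenModulus.

Variable v : nat.
Hypothesis v_gt1 : (1 < v)%N.
Hypothesis v_even : ~~ odd v.

Lemma odd_ZpD (a b : 'Z_v) : odd (a + b)%R = odd a (+) odd b.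
Proof.
by rewrite /= odd_mod ?oddD // (Zp_cast v_gt1); apply/negbTE.
Qed.

Lemma odd_ZpN (y : 'Z_v) : odd (- y)%R = odd y.
Proof.
have := odd_ZpD y (- y); rewrite subrr /=.
by case: (odd y); case: (odd (- y)).
Qed.

Lemma Zp_sum0_odd_card (T : finType) (G : T -> 'Z_v) :
  \sum_x G x = 0 -> ~~ odd #|[set x | odd (G x)]|.
Proof.
move=> sum0.
have odd_sum : odd (\sum_x G x)%R = \big[addb/false]_x odd (G x).
  have odd0 : odd (0 : 'Z_v)%R = false by [].
  by rewrite (big_morph (fun y : 'Z_v => odd y) odd_ZpD odd0).
have odd_card : odd #|[set x | odd (G x)]| = \big[addb/false]_x odd (G x).
  rewrite -sum1dep_card big_mkcond /= (big_morph odd oddD (erefl (odd 0))).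
  by apply: eq_bigr => x _; case: (odd (G x)).
by rewrite odd_card -odd_sum sum0.
Qed.

Lemma count_odd_below (h : nat) : (\sum_(0 <= i < h.*2 | odd i) 1 = h)%N.
Proof.
elim: h => [|h IH]; first by rewrite big_nil.
rewrite doubleS big_mkcond /= !big_nat_recr //= -big_mkcond IH odd_double /=.
by rewrite addn0 addn1.
Qed.

Lemma card_odd_Zp : #|[set y : 'Z_v | odd y]| = v./2.
Proof.
rewrite -sum1dep_card.
rewrite -(big_mkord (fun i => odd i) (fun _ => 1%N)) (Zp_cast v_gt1).
by rewrite -{1}(odd_double_half v) (negbTE v_even) add0n count_odd_below.
Qed.

Lemma odd_notin_J (t : nat) (y : 'Z_v) :
  odd t -> (t %| v)%N -> odd y -> ~~ in_J t y.
Proof.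
move=> odd_t t_dvd_v odd_y; apply/negP => /dvdn_odd /(_ odd_y) odd_q.
by move: v_even; rewrite -(divnK t_dvd_v) oddM odd_q odd_t.
Qed.

Lemma odd_entries_double (lam : nat) (T : finType) (F : T -> option 'Z_v) :
  (forall y : 'Z_v, odd y ->
     (#|[set x | F x == Some y]| + #|[set x | F x == Some (- y)]|)%N = lam) ->
  (#|[set x | odd (odflt 0%R (F x))]| * 2 = lam * v./2)%N.
Proof.
move=> cover; set N := fun y : 'Z_v => #|[set x | F x == Some y]|.
have odd_by_value :
    #|[set x | odd (odflt 0%R (F x))]| = (\sum_(y : 'Z_v | odd y) N y)%N.
  rewrite -sum1dep_card (partition_big (fun x => odflt 0%R (F x)) odd) //=.
  apply: eq_bigr => y odd_y; rewrite sum1dep_card; apply: eq_card => x.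
  rewrite !inE; case: (F x) => [z|] //=.
  by rewrite (inj_eq Some_inj); case: eqP => [->|]; rewrite ?andbT ?andbF.
have sumN : (\sum_(y : 'Z_v | odd y) N (- y) = \sum_(y : 'Z_v | odd y) N y)%N.
  rewrite (reindex_inj (@oppr_inj _)) /=.
  by apply: eq_big => y; rewrite ?odd_ZpN ?opprK.
rewrite odd_by_value muln2 -addnn -{2}sumN -big_split /=.
by rewrite (eq_bigr (fun _ => lam) cover) sum_nat_cond_const card_odd_Zp mulnC.
Qed.

End EvenModulus.

Lemma odd_of_double_eq (lam h S : nat) :
  (lam %% 4 = 2)%N -> odd h -> (S * 2 = lam * h)%N -> odd S.
Proof.
move=> lam_mod4 odd_h eqS.
have [a lam_eq] : exists a, lam = (4 * a + 2)%N by exists (lam %/ 4)%N; lia.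
have -> : S = ((2 * a + 1) * h)%N by nia.
by rewrite oddM oddD oddM /= odd_h.
Qed.

Lemma mod4_eq2_half (x : nat) : (x %% 4 = 2)%N -> ~~ odd x /\ odd x./2.
Proof.
move=> x_mod4; have -> : x = (2 * (x %/ 4) + 1).*2 by rewrite -muln2; lia.
by rewrite odd_double doubleK oddD oddM.
Qed.

Theorem proposition4p2 (m n s k lam t : nat) :
  (0 < m)%N -> (0 < n)%N -> (0 < s)%N -> (0 < k)%N -> (0 < lam)%N -> (0 < t)%N ->
  (lam %| 2 * n * k)%N -> (t %| (2 * n * k) %/ lam)%N ->
  (lam %% 4 = 2)%N -> (heffter_v n k lam t %% 4 = 2)%N -> odd t ->
  ~ lambda_heffter_exists m n s k lam t.
Proof.
move=> _ _ _ _ _ _ _ dvd_t lam_mod4 v_mod4 odd_t [A [_ [_ [cover [row_sum0 _]]]]].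
set v := heffter_v n k lam t in A cover row_sum0 v_mod4 *.
have v_gt1 : (1 < v)%N by lia.
have [v_even odd_half_v] := mod4_eq2_half v_mod4.
have t_dvd_v : (t %| v)%N by rewrite dvdn_add.
pose F (p : 'I_m * 'I_n) : option 'Z_v := A p.1 p.2.
have sum0 : \sum_p odflt 0 (F p) = 0.
  by rewrite -(pair_bigA _ (fun i j => odflt 0 (A i j))) big1.
have cover_odd (y : 'Z_v) : odd y ->
    (#|[set p | F p == Some y]| + #|[set p | F p == Some (- y)]|)%N = lam.
  by move=> odd_y; rewrite cover (negbTE (odd_notin_J v_even odd_t t_dvd_v odd_y)).
apply/negP: (Zp_sum0_odd_card v_gt1 v_even sum0); rewrite negbK.
apply: (odd_of_double_eq lam_mod4 odd_half_v).
by have := odd_entries_double v_gt1 v_even cover_odd.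
Qed.
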